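(* Let $p$ be a prime and $(r,e,d)\in\mathscr{B}_0(p)$ with $p\mid r$. Then $r=p$, $e=p-1$, $d=p-1$, and $\det M_d(f(x)^e)=\varepsilon\,\delta(x_1,\ldots,x_r)^{2e-(p-1)}$ with $\varepsilon=1$ if $p\equiv1,2\pmod 4$ and $\varepsilon=-1$ if $p\equiv3\pmod4$.
   Context: Let $p$ be a prime. $\mathscr{B}_0(p)$ is the set of integer triples $(r,e,d)$ with $2\le r\le p+1$, $(p-1)/2<e\le p-1$, $r(p-1-e)\le p-1$, $d=r-1$. Let $x_1,\ldots,x_r$ be independent indeterminates over $\mathbb{F}_p$, $f(x)=(x-x_1)\cdots(x-x_r)$, write $f(x)^e=\sum_{i\ge0}c_ix^i$ ($c_i=0$ for $i<0$), and let $M_d(f(x)^e)$ be the $d\times d$ matrix with $(i,j)$ entry $c_{ip+j-d-1}$. Put $\delta(x_1,\ldots,x_r)=\prod_{1\le i<j\le r}(x_i-x_j)$. *)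

From HB Require Import structures.
From mathcomp Require Import all_boot all_order all_algebra.
From mathcomp Require Import mpoly.
Set Implicit Arguments. Unset Strict Implicit. Unset Printing Implicit Defensive.
Import GRing.Theory.
Local Open Scope ring_scope.

(* The set B_0(p) of triples (r,e,d). Subtraction p-1 is fine since p >= 2. *)
Definition in_B0 (p r e d : nat) : Prop :=
  [/\ (2 <= r <= p.+1)%N,
      (* (p-1)/2 < e <= p-1, the first inequality read over Q: p-1 < 2e *)
      (p.-1 < 2 * e)%N /\ (e <= p.-1)%N,
      (r * (p.-1 - e) <= p.-1)%N & d = r.-1].

Definition fpoly (F : comRingType) (r : nat) : {poly {mpoly F[r]}} :=
  \prod_(i < r) ('X - ('X_i)%:P).

(* M_d(g): (i,j) entry (1-indexed) c_{ip+j-d-1}, with c_k = 0 for k < 0 *)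
Definition Mmat (R : ringType) (p d : nat) (g : {poly R}) : 'M[R]_d :=
  \matrix_(i < d, j < d)
    (let k := (i.+1 * p + j.+1)%N in
     if (d.+1 <= k)%N then g`_(k - d.+1) else 0).

Definition vdelta (F : comRingType) (r : nat) : {mpoly F[r]} :=
  \prod_(i < r) \prod_(j < r | (i < j)%N) ('X_i - 'X_j).

From HB Require Import structures.
From mathcomp Require Import all_boot all_order all_algebra.
From mathcomp Require Import mpoly.
From mathcomp Require Import fingroup perm.
From mathcomp Require Import zify ring.
Import GRing.Theory.
Local Open Scope ring_scope.

(* Write p = n.+1, let a_0, ..., a_(n-1) be the first n roots of f and z the last one.
   In characteristic p, (X - a)^n = (X^p - a^p) / (X - a) = \sum_m a^(n-m) X^m, so
   writing f^n = (X - a_k)^n H_k, the combination of the rows of M_n(f^n) with weights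
   (a_k^p)^i evaluates H_k at a_k.  Hence V M = diag(H_k(a_k)) W with Vandermonde
   matrices V in the a_k^p and W in the a_k; comparing determinants gives
   det M = (-1)^C(n,2) delta^n, and the sign depends only on p mod 4. *)

Lemma divn_between (q d m : nat) : (q * d <= m < q * d + d)%N -> (m %/ d = q)%N.
Proof.
move=> /andP[lo hi]; have d_gt0 : (0 < d)%N by lia.
have -> : m = (q * d + (m - q * d))%N by lia.
by rewrite divnMDl // divn_small ?addn0 //; lia.
Qed.

Lemma odd_bin2 m : odd 'C(m, 2) = (2 <= m %% 4)%N.
Proof.
have bin2_add4 k : 'C(k.+4, 2) = ('C(k, 2) + (k * 4 + 6))%N.
  by rewrite !binS !bin1 !bin0; lia.
rewrite {1}(divn_eq m 4); elim: (m %/ 4)%N => [|q IH].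
  rewrite mul0n add0n; move: (ltn_pmod m (isT : (0 < 4)%N)).
  by case: (m %% 4)%N => [|[|[|[|s]]]].
have -> : (q.+1 * 4 + m %% 4 = (q * 4 + m %% 4).+4)%N by lia.
by rewrite bin2_add4 oddD IH oddD oddM andbF addbF.
Qed.

Definition sub_pairs {R : comNzRingType} {n} (a : 'I_n -> R) : R :=
  \prod_(i < n) \prod_(j < n | (i < j)%N) (a i - a j).

Section PairProducts.
Variable R : comNzRingType.

Lemma prod_pairs_recr n (F : 'I_n.+1 -> 'I_n.+1 -> R) :
  \prod_(i < n.+1) \prod_(j < n.+1 | (i < j)%N) F i j =
  \prod_(i < n) ((\prod_(j < n | (i < j)%N)
       F (widen_ord (leqnSn n) i) (widen_ord (leqnSn n) j))
     * F (widen_ord (leqnSn n) i) ord_max).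
Proof.
rewrite big_ord_recr /= [X in _ * X]big1 ?mulr1; last first.
  by move=> j; rewrite ltnNge -ltnS ltn_ord.
apply: eq_bigr => i _; rewrite big_mkcond big_ord_recr /= -big_mkcond /=.
by rewrite ltn_ord.
Qed.

Lemma prod_pairs_const n (c : R) :
  \prod_(i < n) \prod_(j < n | (i < j)%N) c = c ^+ 'C(n, 2).
Proof.
elim: n => [|n IH]; first by rewrite big_ord0.
by rewrite prod_pairs_recr big_split /= IH prodr_const card_ord binS bin1 exprD.
Qed.

Lemma sub_pairs_recr n (u : 'I_n.+1 -> R) :
  sub_pairs u = sub_pairs (u \o widen_ord (leqnSn n))
                * \prod_(i < n) (u (widen_ord (leqnSn n) i) - u ord_max).
Proof. by rewrite /sub_pairs prod_pairs_recr big_split. Qed.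

Lemma prod_pairs_subC n (a : 'I_n -> R) :
  \prod_(i < n) \prod_(j < n | (i < j)%N) (a j - a i)
  = (-1) ^+ 'C(n, 2) * sub_pairs a.
Proof.
rewrite /sub_pairs -prod_pairs_const -big_split; apply: eq_bigr => i _ /=.
by rewrite -big_split; apply: eq_bigr => j _; rewrite /= mulN1r opprB.
Qed.

Lemma prod_offdiag_sub n (a : 'I_n -> R) :
  \prod_(k < n) \prod_(l < n | l != k) (a k - a l)
  = (-1) ^+ 'C(n, 2) * sub_pairs a ^+ 2.
Proof.
have split_ne k : \prod_(l < n | l != k) (a k - a l)
    = \prod_(l < n | (k < l)%N) (a k - a l) * \prod_(l < n | (l < k)%N) (a k - a l).
  rewrite (bigID (fun l : 'I_n => (k < l)%N)) /=.
  by congr (_ * _); apply: eq_bigl => l; rewrite -(inj_eq val_inj) /=; case: ltngtP.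
rewrite (eq_bigr _ (fun k _ => split_ne k)) big_split /=.
rewrite [X in _ * X](exchange_big_dep xpredT) //=.
by rewrite prod_pairs_subC -/(sub_pairs a) mulrCA expr2.
Qed.

Lemma det_rev_Vandermonde n (a : 'I_n -> R) :
  \det (\matrix_(k < n, j < n) a k ^+ (n - j.+1)) = sub_pairs a.
Proof.
set W := \matrix_(k, j) _.
pose s : 'S_n := perm (@rev_ord_inj n).
have det_rev2 : \det (row_perm s (col_perm s W)) = \det W.
  rewrite row_permE col_permE !det_mulmx !det_perm odd_permV.
  by case: (odd_perm s); rewrite /= ?expr0 ?expr1 ?mulr1 ?mul1r ?mulN1r ?mulrN1 ?opprK.
rewrite -det_rev2.
have -> : row_perm s (col_perm s W) = (Vandermonde n (\row_k a (rev_ord k)))^T.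
  apply/matrixP => i j; rewrite !mxE !permE; congr (_ ^+ _) => /=.
  by have := ltn_ord j; lia.
rewrite det_tr det_Vandermonde /sub_pairs.
under eq_bigr => i _ do under eq_bigr => j _ do rewrite !mxE.
rewrite !pair_big_dep /=.
pose h (ij : 'I_n * 'I_n) := (rev_ord ij.2, rev_ord ij.1).
rewrite (reindex_inj (h := h)); last first.
  by apply: (can_inj (g := h)) => -[i j]; rewrite /h /= !rev_ordK.
apply: eq_big => [[i j]|[i j] _] /=; last by rewrite !rev_ordK.
by have := ltn_ord i; have := ltn_ord j; lia.
Qed.

End PairProducts.

Definition geom_poly {R : nzRingType} n (c : R) : {poly R} :=
  \poly_(m < n.+1) c ^+ (n - m).

Lemma geom_polyE (R : comNzRingType) n (c : R) :
  \sum_(i < n.+1) 'X ^+ (n - i) * c%:P ^+ i = geom_poly n c.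
Proof.
apply/polyP => m; rewrite coef_sum coef_poly.
under eq_bigr => i _ do rewrite -polyC_exp mulrC coefCM coefXn.
case: ifP => m_le_n.
  have i_lt : (n - m < n.+1)%N by lia.
  rewrite (bigD1 (Ordinal i_lt)) //= big1 ?addr0.
    have -> : (m == n - (n - m))%N by apply/eqP; lia.
    by rewrite mulr1.
  move=> i /eqP i_ne; case: eqP => [m_eq|]; last by rewrite mulr0.
  by case: i_ne; apply: val_inj => /=; have := ltn_ord i; lia.
rewrite big1 // => i _; case: eqP => [m_eq|]; last by rewrite mulr0.
by have := ltn_ord i; lia.
Qed.

Lemma geom_poly_pchar (R : idomainType) n (c : R) :
  n.+1 \in [pchar R] -> geom_poly n c = ('X - c%:P) ^+ n.
Proof.
move=> charR; have charRX : n.+1 \in [pchar {poly R}] by rewrite (rmorph_pchar polyC).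
have frobXC : ('X - c%:P) ^+ n.+1 = 'X ^+ n.+1 - c%:P ^+ n.+1.
  by rewrite -!(pFrobenius_autE charRX) pFrobenius_autB_comm //; apply: mulrC.
apply: (mulfI (negbT (polyXsubC_eq0 c))).
by rewrite -exprS frobXC subrXX succnK geom_polyE.
Qed.

Section GeomCoefficients.
Variables (R : comNzRingType) (n j : nat) (c : R).
Hypothesis j_lt_n : (j < n)%N.

(* Only i = (m + n - j.+1) %/ n.+1 meets the n.+1 nonzero coefficients
   of geom_poly n c * 'X^m. *)
Lemma coef_sum_geom_polyMXn m : (m <= n * n)%N ->
  \sum_(i < n) (c ^+ n.+1) ^+ i * (geom_poly n c * 'X^m)`_(i * n.+1 + j.+1)
  = c ^+ (n - j.+1 + m).
Proof.
move=> m_le; set t := (m + n - j.+1)%N.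
have q_lt : (t %/ n.+1 < n)%N by rewrite ltn_divLR //; lia.
rewrite (bigD1 (Ordinal q_lt)) //= big1 ?addr0; last first.
  move=> i /eqP i_ne; rewrite coefMXn coef_poly.
  case: ifP => [|i_ge]; first by rewrite mulr0.
  case: ifP => [i_win|]; last by rewrite mulr0.
  by case: i_ne; apply: val_inj => /=; symmetry; apply: divn_between; lia.
have t_eq := divn_eq t n.+1; have t_mod := ltn_pmod t (ltn0Sn n).
rewrite coefMXn coef_poly ifN; last by rewrite -leqNgt; lia.
by rewrite ifT; [rewrite -exprM -exprD; congr (_ ^+ _); lia | lia].
Qed.

Lemma coef_sum_geom_polyM (H : {poly R}) : (size H <= (n * n).+1)%N ->
  \sum_(i < n) (c ^+ n.+1) ^+ i * (geom_poly n c * H)`_(i * n.+1 + j.+1)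
  = c ^+ (n - j.+1) * H.[c].
Proof.
move=> size_H.
have H_sum : H = \sum_(m < (n * n).+1) H`_m *: 'X^m.
  rewrite -poly_def; apply/polyP => k; rewrite coef_poly.
  by case: ltnP => // k_ge; rewrite nth_default //; apply: leq_trans size_H k_ge.
rewrite {1}H_sum (horner_coef_wide c size_H) !mulr_sumr.
under eq_bigr => i _ do rewrite coef_sum mulr_sumr.
rewrite exchange_big; apply: eq_bigr => m _.
under eq_bigr => i _ do rewrite -scalerAr coefZ mulrCA.
rewrite -mulr_sumr coef_sum_geom_polyMXn; last by have := ltn_ord m; lia.
by rewrite exprD mulrCA.
Qed.
End GeomCoefficients.

Lemma Mmat_predE (R : nzRingType) n (g : {poly R}) (i j : 'I_n) :
  Mmat n.+1 n g i j = g`_(i * n.+1 + j.+1).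
Proof. by rewrite mxE /= ifT; [congr (g`_ _); lia | lia]. Qed.

Lemma Vandermonde_mulmx_Mmat {R : comNzRingType} {n} {a : 'I_n -> R}
    {H : 'I_n -> {poly R}} {g : {poly R}} :
  (forall k, g = geom_poly n (a k) * H k) ->
  (forall k, size (H k) <= (n * n).+1)%N ->
  (Vandermonde n (\row_k a k ^+ n.+1))^T *m Mmat n.+1 n g
  = diag_mx (\row_k (H k).[a k]) *m \matrix_(k, j < n) a k ^+ (n - j.+1).
Proof.
move=> g_fact size_H; apply/matrixP => k j; rewrite mul_diag_mx !mxE.
under eq_bigr => i _ do rewrite Mmat_predE mxE /Vandermonde !mxE.
by rewrite (g_fact k) coef_sum_geom_polyM // mulrC.
Qed.

Section PrimeCharacteristic.
Variables (R : idomainType) (n : nat).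
Hypothesis charR : n.+1 \in [pchar R].

Lemma exprB_pchar (x y : R) : (x - y) ^+ n.+1 = x ^+ n.+1 - y ^+ n.+1.
Proof. by rewrite -!(pFrobenius_autE charR) pFrobenius_autB_comm //; apply: mulrC. Qed.

Lemma signr_pchar : (-1 : R) ^+ n = 1.
Proof.
have := pFrobenius_autN charR 1; rewrite !(pFrobenius_autE charR) expr1n exprS mulN1r.
exact: oppr_inj.
Qed.

Variable u : 'I_n.+1 -> R.
Hypothesis u_inj : injective u.

Local Notation w := (widen_ord (leqnSn n)).
Let a (k : 'I_n) := u (w k).
Let z := u ord_max.
Let cofactor (k : 'I_n) := \prod_(l < n.+1 | l != w k) ('X - (u l)%:P) ^+ n.

Lemma prod_XsubC_cofactor k :
  (\prod_(i < n.+1) ('X - (u i)%:P)) ^+ n = geom_poly n (a k) * cofactor k.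
Proof. by rewrite -prodrXl (bigD1 (w k)) //= geom_poly_pchar. Qed.

Lemma size_cofactor k : (size (cofactor k) <= (n * n).+1)%N.
Proof.
rewrite size_prod => [|l _]; last by rewrite expf_neq0 // polyXsubC_eq0.
under eq_bigr => l _ do rewrite size_exp_XsubC.
by rewrite sum_nat_const cardC1 card_ord; lia.
Qed.

Lemma horner_cofactor k :
  (cofactor k).[a k] = (\prod_(l < n | l != k) (a k - a l) * (a k - z)) ^+ n.
Proof.
rewrite horner_prod big_mkcond big_ord_recr /= ifT; last first.
  by apply/eqP => /(congr1 val) /=; have := ltn_ord k; lia.
rewrite -big_mkcond /= exprMn -prodrXl horner_exp hornerXsubC; congr (_ * _).
apply: eq_big => [l|l _]; first by rewrite -(inj_eq val_inj) /=.
by rewrite horner_exp hornerXsubC.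
Qed.

Lemma prod_horner_cofactor :
  \prod_(k < n) (cofactor k).[a k]
  = ((-1) ^+ 'C(n, 2) * sub_pairs a ^+ 2 * \prod_(k < n) (a k - z)) ^+ n.
Proof.
under eq_bigr => k _ do rewrite horner_cofactor.
by rewrite prodrXl big_split /= prod_offdiag_sub.
Qed.

Lemma det_Mmat_prod_XsubC :
  \det (Mmat n.+1 n ((\prod_(i < n.+1) ('X - (u i)%:P)) ^+ n))
  = (-1) ^+ 'C(n, 2) * sub_pairs u ^+ n.
Proof.
set s : R := (-1) ^+ 'C(n, 2).
have s_n : s ^+ n = 1 by rewrite -exprM mulnC exprM signr_pchar expr1n.
have s_s : s * s = 1 by rewrite -exprMn mulrNN mulr1 expr1n.
have sub_pairs_neq0 : sub_pairs a != 0.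
  apply/prodf_neq0 => i _; apply/prodf_neq0 => j lt_ij; rewrite subr_eq0.
  by apply/eqP => /u_inj /(congr1 val) /= eq_ij; rewrite eq_ij ltnn in lt_ij.
have det_V : \det (Vandermonde n (\row_k a k ^+ n.+1))^T = (s * sub_pairs a) ^+ n.+1.
  rewrite det_tr det_Vandermonde -prod_pairs_subC -prodrXl; apply: eq_bigr => i _.
  by rewrite -prodrXl; apply: eq_bigr => j _; rewrite !mxE exprB_pchar.
have := congr1 determinant (Vandermonde_mulmx_Mmat prod_XsubC_cofactor size_cofactor).
rewrite !det_mulmx det_V det_diag det_rev_Vandermonde.
under eq_bigr => k _ do rewrite mxE.
rewrite prod_horner_cofactor => eq_det.
apply: (mulfI (x := (s * sub_pairs a) ^+ n.+1)).
  by rewrite expf_neq0 // mulf_neq0 // signr_eq0.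
rewrite eq_det sub_pairs_recr -/(sub_pairs a) [(s * _) ^+ _]exprS !exprMn s_n.
by ring: s_s.
Qed.

End PrimeCharacteristic.

Lemma mpolyX_inj (R : nzRingType) n : injective (fun i : 'I_n => 'X_i : {mpoly R[n]}).
Proof.
move=> i j /(congr1 (fun q : {mpoly R[n]} => q@_U_(i))) /=.
rewrite !mcoeffX eqxx eq_mnm1; case: eqP => // _ /eqP.
by rewrite oner_eq0.
Qed.

Lemma det_Mmat_fpoly p : prime p ->
  \det (Mmat p p.-1 (fpoly 'F_p p ^+ p.-1))
  = (-1) ^+ 'C(p.-1, 2) * vdelta 'F_p p ^+ p.-1.
Proof.
case: p => [//|n] p_pr; apply: det_Mmat_prod_XsubC; last exact: mpolyX_inj.
exact: (rmorph_pchar (@mpolyC n.+1 _)) (pchar_Fp p_pr).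
Qed.

Theorem proposition5 (p r e d : nat) :
  prime p -> in_B0 p r e d -> (p %| r)%N ->
  [/\ r = p, e = p.-1, d = p.-1,
      ((p %% 4 = 1)%N \/ (p %% 4 = 2)%N ->
         \det (Mmat p d (fpoly 'F_p r ^+ e))
         = vdelta 'F_p r ^+ (2 * e - p.-1)) &
      ((p %% 4 = 3)%N ->
         \det (Mmat p d (fpoly 'F_p r ^+ e))
         = - vdelta 'F_p r ^+ (2 * e - p.-1))].
Proof.
move=> p_pr [/andP[r_ge2 r_le] [_ e_le] r_e ->] /dvdnP[q r_eq].
have p_gt1 := prime_gt1 p_pr.
have r_p : r = p by rewrite r_eq (_ : q = 1%N) ?mul1n //; nia.
have e_p : e = p.-1 by rewrite r_p in r_e; nia.
rewrite r_p e_p (_ : 2 * p.-1 - p.-1 = p.-1)%N; last by lia.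
split=> // [p_mod | p_mod]; rewrite det_Mmat_fpoly // -signr_odd odd_bin2.
  by rewrite (_ : (2 <= p.-1 %% 4)%N = false) ?mul1r //; lia.
by rewrite (_ : (2 <= p.-1 %% 4)%N) ?mulN1r //; lia.
Qed.
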